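(* In $\mathfrak{sl}_2[[u]]$ let $v=(1+u)^{-1}-1$ and $\mathcal Y_k=(-1)^k(u^k-v^k)h$ ($k\ge0$). Then $\mathcal Y_0=0$ and for every $n\ge1$ $$\mathcal Y_{2n}=\sum_{k\ge n}(-1)^{k-n+1}\frac{(4^{k-n+1}-1)B_{k-n+1}}{k-n+1}\binom{2k}{2n-1}\mathcal Y_{2k+1},$$ the sum converging $u$-adically. Consequently, for every $L\ge1$, the same relation (a finite sum) holds among the images of $Y_k=(-1)^k\big((t-1)^k-(t^{-1}-1)^k\big)h$ in $\mathfrak{OA}/\mathfrak I_{(t-1)^L}$, where $Y_k\mapsto0$ for $k\ge L$.
   Context: $\mathfrak{sl}_2$ over $\mathbb C$ has basis $e,f,h$ with $[e,f]=h$, $[h,e]=2e$, $[h,f]=-2f$; $\mathfrak{sl}_2[[u]]=\mathbb C[[u]]\otimes\mathfrak{sl}_2$. Bernoulli numbers: define $b_j$ by $\frac{x}{e^x-1}=\sum_{j\ge0}b_j\frac{x^j}{j!}$ and set $B_j=(-1)^{j-1}b_{2j}$ for $j\ge1$ (so $B_1=1/6$, $B_2=1/30$). The Onsager algebra is $\mathfrak{OA}=\{p(t)e+p(t^{-1})f+q(t)h:\ p,q\in\mathbb C[t,t^{-1}],\ q(t^{-1})=-q(t)\}\subset\mathbb C[t,t^{-1}]\otimes\mathfrak{sl}_2$, and $\mathfrak I_{(t-1)^L}=\{p(t)e+p(t^{-1})f+q(t)h\in\mathfrak{OA}: p,q\in(t-1)^L\mathbb C[t,t^{-1}]\}$ is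 an ideal. Taylor expansion at $t=1$ ($u=t-1$) embeds $\mathfrak{OA}$ into $\mathfrak{sl}_2[[u]]$, sending $Y_k$ to $\mathcal Y_k$. *)

From mathcomp Require Import all_boot all_algebra.
From mathcomp Require Import reals complex.
Set Implicit Arguments. Unset Strict Implicit. Unset Printing Implicit Defensive.
Import GRing.Theory Num.Theory.
Local Open Scope ring_scope.

(* An element of sl2[[u]] of the form a(u) h is represented by its
   h-coefficient a(u) in K[[u]], i.e. by its coefficient sequence. *)
Definition fps (K : fieldType) := nat -> K.

Section FPS.
Variable K : fieldType.
Definition fps0 : fps K := fun _ => 0.
Definition fps1 : fps K := fun m => (m == 0)%:R.
Definition fpsu : fps K := fun m => (m == 1)%:R.
Definition fpsadd (f g : fps K) : fps K := fun m => f m + g m.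
Definition fpssub (f g : fps K) : fps K := fun m => f m - g m.
Definition fpsscale (c : K) (f : fps K) : fps K := fun m => c * f m.
Definition fpsmul (f g : fps K) : fps K :=
  fun m => \sum_(i < m.+1) f i * g (m - i)%N.
Definition fpspow (f : fps K) (k : nat) : fps K := iter k (fpsmul f) fps1.

Definition calY (v : fps K) (k : nat) : fps K :=
  fpsscale ((-1) ^+ k) (fpssub (fpspow fpsu k) (fpspow v k)).
End FPS.

(* b : nat -> K are the Bernoulli numbers iff x/(e^x-1) = sum_j b_j x^j/j!,
   i.e. ((e^x-1)/x) * (sum_j b_j x^j/j!) = 1, coefficientwise: *)
Definition is_bernoulli (K : fieldType) (b : nat -> K) : Prop :=
  forall m : nat,
    \sum_(j < m.+1) b j / ((j`!)%:R * (((m - j).+1)`!)%:R) = (m == 0)%:R.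

Definition bigB (K : fieldType) (b : nat -> K) (j : nat) : K :=
  (-1) ^+ (j.-1) * b (2 * j)%N.

Definition relcoef (K : fieldType) (b : nat -> K) (n k : nat) : K :=
  let j := (k - n).+1 in
  (-1) ^+ j * ((4 ^ j)%:R - 1) * bigB b j / j%:R * ('C(2 * k, (2 * n).-1))%:R.

(* A pair (p, n) represents the Laurent polynomial p(t) * t^(-n). *)
Definition laurent (K : fieldType) := ({poly K} * nat)%type.

Section Laurent.
Variable K : fieldType.
Definition lconst (c : K) : laurent K := (c%:P, 0%N).
Definition lt : laurent K := ('X, 0%N).
Definition ltinv : laurent K := (1, 1%N).
Definition ladd (x y : laurent K) : laurent K :=
  (x.1 * 'X^(y.2) + y.1 * 'X^(x.2), (x.2 + y.2)%N).
Definition lmul (x y : laurent K) : laurent K := (x.1 * y.1, (x.2 + y.2)%N).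
Definition lscale (c : K) (x : laurent K) : laurent K := (c *: x.1, x.2).
Definition lsub (x y : laurent K) : laurent K := ladd x (lscale (-1) y).
Definition lpow (x : laurent K) (k : nat) : laurent K := iter k (lmul x) (lconst 1).
Definition lsum (n K' : nat) (F : nat -> laurent K) : laurent K :=
  foldr (fun k acc => ladd (F k) acc) (lconst 0) (iota n (K' - n)).

(* x lies in the ideal (t-1)^L C[t,t^-1] of C[t,t^-1]:
   p t^-n = (t-1)^L r t^-m for some polynomial r and m. *)
Definition in_tideal (L : nat) (x : laurent K) : Prop :=
  exists (r : {poly K}) (m : nat), x.1 * 'X^m = ('X - 1) ^+ L * r * 'X^(x.2).

Definition OY (k : nat) : laurent K :=
  lscale ((-1) ^+ k)
    (lsub (lpow (lsub lt (lconst 1)) k) (lpow (lsub ltinv (lconst 1)) k)).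
End Laurent.

From mathcomp Require Import all_boot all_algebra.
From mathcomp Require Import reals complex.
From mathcomp Require Import ring zify.
From Stdlib Require Import Setoid Morphisms FunctionalExtensionality.
Import GRing.Theory Num.Theory.
Local Open Scope ring_scope.
Set Implicit Arguments. Unset Strict Implicit. Unset Printing Implicit Defensive.

(* Let beta(x) = x/(e^x - 1) = \sum_j b_j x^j/j!.  Then P(x) = 2/(e^x + 1) equals
   2 (beta(x) - beta(2x))/x and P(-x) = e^x P(x), so g(x) = x^(2n-1)/(2n-1)! P(x) satisfies
   g(x) = -e^-x g(-x), i.e. its exponential coefficients obey g_M = (-1)^(M+1) \sum_i C(M, i) g_i.
   As v = -u/(1 + u), the u^(M+1)-coefficient of v^(i+1) is (-1)^(M+1) C(M, i), so this says
   exactly that \sum_i (-1)^(i+1) g_i calY_(i+1) has no u^(M+1)-coefficient.  Since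
   g_(2k-1) = [k == n] and g_(2k) is the k-th coefficient of the relation, the relation holds
   coefficientwise, and only the terms with 2k + 1 <= m meet the u^m-coefficient.
   In OA / I_((t-1)^L), Taylor expansion at t = 1 (t |-> 1 + u, t^-1 |-> 1 + v) is injective
   modulo u^L, so the relation descends to the quotient from its first L coefficients. *)

(** * Truncated power series *)

Definition eqmodX {K : nzRingType} (N : nat) (p q : {poly K}) : Prop :=
  take_poly N p = take_poly N q.

Notation "p = q %[modX N ]" := (eqmodX N p q) (at level 70, q at next level).

Section TruncatedSeries.
Variable K : nzRingType.
Implicit Types p q : {poly K}.

Lemma eqmodXP N p q : (forall i, (i < N)%N -> p`_i = q`_i) <-> p = q %[modX N].
Proof.
split=> [e | e i lt_iN].
  by apply/polyP => i; rewrite !coef_take_poly; case: ifP => // /e.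
by have := congr1 (fun r : {poly K} => r`_i) e; rewrite /= !coef_take_poly lt_iN.
Qed.

Lemma coef_eqmodX N p q i : p = q %[modX N] -> (i < N)%N -> p`_i = q`_i.
Proof. by move/eqmodXP; apply. Qed.

Lemma eq_eqmodX N p q : p = q -> p = q %[modX N]. Proof. by move->. Qed.

Lemma eqmodX_refl N p : p = p %[modX N]. Proof. by []. Qed.

Lemma eqmodX_sym N p q : p = q %[modX N] -> q = p %[modX N].
Proof. exact: esym. Qed.

Lemma eqmodX_trans N p q r : p = q %[modX N] -> q = r %[modX N] -> p = r %[modX N].
Proof. exact: etrans. Qed.

Lemma eqmodX_le M N p q : (M <= N)%N -> p = q %[modX N] -> p = q %[modX M].
Proof.
by move=> le_MN /eqmodXP e; apply/eqmodXP => i lt_iM; apply/e/(leq_trans lt_iM).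
Qed.

Lemma eqmodXD N p p' q q' :
  p = p' %[modX N] -> q = q' %[modX N] -> p + q = p' + q' %[modX N].
Proof. by rewrite /eqmodX !take_polyD => -> ->. Qed.

Lemma eqmodXZ N c p p' : p = p' %[modX N] -> c *: p = c *: p' %[modX N].
Proof. by rewrite /eqmodX !take_polyZ => ->. Qed.

Lemma eqmodXN N p p' : p = p' %[modX N] -> - p = - p' %[modX N].
Proof. by rewrite -!scaleN1r; apply: eqmodXZ. Qed.

Lemma eqmodXM N p p' q q' :
  p = p' %[modX N] -> q = q' %[modX N] -> p * q = p' * q' %[modX N].
Proof.
move=> /eqmodXP e1 /eqmodXP e2; apply/eqmodXP => i lt_iN; rewrite !coefM.
apply: eq_bigr => [[j /= lt_ji]] _.
by rewrite e1 ?e2 //; apply: leq_ltn_trans lt_iN; rewrite ?leq_subr // -ltnS.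
Qed.

Lemma eqmodXX N k p p' : p = p' %[modX N] -> p ^+ k = p' ^+ k %[modX N].
Proof. by move=> e; elim: k => [|k IH] //; rewrite !exprS; apply: eqmodXM. Qed.

Lemma eqmodX_XM N p q : 'X * p = 'X * q %[modX N.+1] <-> p = q %[modX N].
Proof.
rewrite -!eqmodXP; split=> [e i lt_iN | e [|i] lt_iN]; rewrite ?coefXM //=.
- by have := e i.+1 lt_iN; rewrite !coefXM.
- exact: e.
Qed.
End TruncatedSeries.

Notation dil c p := (p \Po (c *: 'X)).

Section Dilation.
Variable K : comNzRingType.
Implicit Types p q : {poly K}.

Lemma coef_dil c p i : (dil c p)`_i = c ^+ i * p`_i.
Proof.
elim/poly_ind: p i => [|p a IH] i; first by rewrite comp_poly0 !coef0 mulr0.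
rewrite comp_poly_MXaddC -scalerAr !coefD !coefZ !coefMX !coefC.
by case: i => [|i] /=; rewrite ?mulr0 ?addr0 ?add0r ?expr0 ?mul1r // IH exprS mulrA.
Qed.

Lemma dil1 p : dil 1 p = p.
Proof. by rewrite scale1r comp_polyXr. Qed.

Lemma dil0 p : dil 0 p = (p`_0)%:P.
Proof. by rewrite scale0r comp_poly0r. Qed.

Lemma eqmodX_dil N c p q : p = q %[modX N] -> dil c p = dil c q %[modX N].
Proof. by move=> /eqmodXP e; apply/eqmodXP => i lt_iN; rewrite !coef_dil e. Qed.
End Dilation.

Add Parametric Relation (K : nzRingType) (N : nat) : {poly K} (@eqmodX K N)
  reflexivity proved by (@eqmodX_refl K N)
  symmetry proved by (@eqmodX_sym K N)
  transitivity proved by (@eqmodX_trans K N) as eqmodX_rel.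
Add Parametric Morphism (K : nzRingType) (N : nat) : (@GRing.add {poly K})
  with signature eqmodX N ==> eqmodX N ==> eqmodX N as eqmodX_add_mor.
Proof. by move=> *; apply: eqmodXD. Qed.
Add Parametric Morphism (K : nzRingType) (N : nat) : (@GRing.opp {poly K})
  with signature eqmodX N ==> eqmodX N as eqmodX_opp_mor.
Proof. by move=> *; apply: eqmodXN. Qed.
Add Parametric Morphism (K : nzRingType) (N : nat) : (@GRing.mul {poly K})
  with signature eqmodX N ==> eqmodX N ==> eqmodX N as eqmodX_mul_mor.
Proof. by move=> *; apply: eqmodXM. Qed.
Add Parametric Morphism (K : nzRingType) (N : nat) (c : K) : (@GRing.scale K {poly K} c)
  with signature eqmodX N ==> eqmodX N as eqmodX_scale_mor.
Proof. by move=> *; apply: eqmodXZ. Qed.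
Add Parametric Morphism (K : comNzRingType) (N : nat) (c : K) : (comp_poly (c *: 'X : {poly K}))
  with signature eqmodX N ==> eqmodX N as eqmodX_dil_mor.
Proof. by move=> *; apply: eqmodX_dil. Qed.
Add Parametric Morphism (K : nzRingType) (N : nat) : (@GRing.exp {poly K})
  with signature eqmodX N ==> eq ==> eqmodX N as eqmodX_exp_mor.
Proof. by move=> p q e k; apply: eqmodXX. Qed.

(** * The series e^x, x/(e^x - 1) and 2/(e^x + 1) *)

Lemma natr_fact_neq0 (K : numDomainType) n : (n`!%:R : K) != 0.
Proof. by rewrite pnatr_eq0 -lt0n fact_gt0. Qed.

Section Exponential.
Variables (K : numFieldType) (T : nat).

(* e^x and (e^x - 1)/x, truncated below x^T *)
Definition expT : {poly K} := \poly_(i < T) (i`!%:R)^-1.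
Definition expm1T : {poly K} := \poly_(i < T) (i.+1`!%:R)^-1.

Lemma expm1T_mulX : 'X * expm1T = expT - 1 %[modX T].
Proof.
apply/eqmodXP => -[|i] lt_iT; rewrite coefXM coefB coef1 !coef_poly lt_iT /=.
  by rewrite invr1 subrr.
by rewrite ltnW // subr0.
Qed.

Lemma expT_dilD a c :
  dil a expT * dil c expT = dil (a + c) expT %[modX T].
Proof.
apply/eqmodXP => m lt_mT; rewrite coefM coef_dil addrC exprDn coef_poly lt_mT mulr_suml.
apply: eq_bigr => [[j /=]]; rewrite ltnS => le_jm _.
rewrite !coef_dil !coef_poly (leq_ltn_trans le_jm lt_mT).
rewrite (leq_ltn_trans (leq_subr j m) lt_mT) -mulr_natr.
have -> : (m`!%:R : K) = 'C(m, j)%:R * j`!%:R * (m - j)`!%:R.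
  by rewrite -!natrM -mulnA bin_fact.
by field; rewrite !natr_fact_neq0 pnatr_eq0 -lt0n bin_gt0 le_jm.
Qed.

Lemma expT_mul_dilN1 : expT * dil (-1) expT = 1 %[modX T].
Proof.
have := expT_dilD 1 (-1); rewrite dil1 subrr dil0 coef_poly.
case: T => [|T'] e; first by rewrite /eqmodX !take_poly0l.
by rewrite e /= invr1.
Qed.

Lemma expT_sqr : expT * expT = dil 2 expT %[modX T].
Proof. by have := expT_dilD 1 1; rewrite dil1. Qed.

Lemma expm1T_dilN1_mulX :
  'X * dil (-1) expm1T = 1 - dil (-1) expT %[modX T].
Proof.
have := eqmodX_dil (-1) expm1T_mulX.
rewrite comp_polyM comp_polyX comp_polyB comp_polyC -scalerAl scaleN1r => e.
by rewrite -(opprK ('X * _)) e opprB polyC1.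
Qed.

Lemma expm1T_dilN1 N : (N < T)%N ->
  expm1T = expT * dil (-1) expm1T %[modX N].
Proof.
move=> lt_NT; apply/eqmodX_XM.
rewrite (eqmodX_le lt_NT expm1T_mulX) mulrCA (eqmodX_le lt_NT expm1T_dilN1_mulX).
by rewrite mulrBr mulr1 (eqmodX_le lt_NT expT_mul_dilN1).
Qed.

Lemma expm1T_dil2 N : (N < T)%N ->
  2 *: dil 2 expm1T = expm1T * (expT + 1) %[modX N].
Proof.
move=> lt_NT; apply/eqmodX_XM.
have e := eqmodX_le lt_NT expm1T_mulX.
transitivity (dil 2 ('X * expm1T)).
  by rewrite comp_polyM comp_polyX -scalerAl -scalerAr.
rewrite (eqmodX_dil 2 e) comp_polyB comp_polyC -(eqmodX_le lt_NT expT_sqr) mulrA e.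
by apply: eq_eqmodX; rewrite polyC1; ring.
Qed.
End Exponential.

Section BernoulliSeries.
Variables (K : numFieldType) (b : nat -> K) (T : nat).
Hypothesis bernoulli_b : is_bernoulli b.
Local Notation expT := (expT K T).
Local Notation expm1T := (expm1T K T).

Definition bernT : {poly K} := \poly_(i < T) (b i / i`!%:R).

Lemma bernT_mul_expm1T : bernT * expm1T = 1 %[modX T].
Proof.
apply/eqmodXP => m lt_mT; rewrite coefM coef1 -(bernoulli_b m); apply: eq_bigr => [[j /=]].
rewrite ltnS => le_jm _; rewrite !coef_poly (leq_ltn_trans le_jm lt_mT).
by rewrite (leq_ltn_trans (leq_subr j m) lt_mT) -subSn // invfM mulrA.
Qed.

Lemma bernT_dilN1 N : (N < T)%N -> bernT = dil (-1) bernT - 'X %[modX N].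
Proof.
move=> lt_NT; have le_NT := ltnW lt_NT.
have inv_expm1T : expm1T * (dil (-1) bernT - 'X) = 1 %[modX N].
  rewrite (eqmodXM (expm1T_dilN1 K lt_NT) (eqmodX_refl _ _)).
  transitivity (expT * dil (-1) (bernT * expm1T)
                - expT * ('X * dil (-1) (expm1T))).
    by apply: eq_eqmodX; rewrite comp_polyM; ring.
  have e : dil (-1) (bernT * expm1T) = 1 %[modX N].
    by rewrite (eqmodX_le le_NT bernT_mul_expm1T) comp_polyC.
  rewrite e (eqmodX_le le_NT (expm1T_dilN1_mulX K T)) mulrBr subKr.
  exact: eqmodX_le le_NT (expT_mul_dilN1 K T).
transitivity (bernT * (expm1T * (dil (-1) bernT - 'X))).
  by rewrite inv_expm1T mulr1.
by rewrite mulrA (eqmodX_le le_NT bernT_mul_expm1T) mul1r.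
Qed.
End BernoulliSeries.

Section BernoulliNumbers.
Variables (K : numFieldType) (b : nat -> K).
Hypothesis bernoulli_b : is_bernoulli b.

Lemma bernoulli_reflect i : b i = (-1) ^+ i * b i - (i == 1)%:R * i`!%:R.
Proof.
have /eqmodXP/(_ i (ltnSn i)) := bernT_dilN1 bernoulli_b (ltnSn i.+1).
rewrite coefB coef_dil coefX !coef_poly ltnS leqnSn => e.
apply: (mulIf (invr_neq0 (natr_fact_neq0 K i))); rewrite e.
by case: (i == 1) => /=; field; rewrite natr_fact_neq0.
Qed.

Lemma bernoulli1 : b 1 = - 2^-1.
Proof.
have := bernoulli_reflect 1; rewrite expr1 mulN1r mul1r => e.
have twoB1 : b 1 + b 1 = -1 by rewrite {1}e addrC addNKr.
apply: (@mulfI _ 2); first by rewrite pnatr_eq0.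
by rewrite mulrN mulfV ?pnatr_eq0 // -twoB1 mulr_natl mulr2n.
Qed.

Lemma bernoulli_odd j : b (2 * j).+3 = 0.
Proof.
have := bernoulli_reflect (2 * j).+3.
rewrite -signr_odd /= oddM andFb expr1 mulN1r mul0r subr0 => e.
have : b (2 * j).+3 *+ 2 = 0 by rewrite mulr2n {1}e addNr.
by move/eqP; rewrite mulrn_eq0 => /eqP.
Qed.
End BernoulliNumbers.

(* The coefficients E_M(0)/M! of 2/(e^x + 1) = 2 (x/(e^x - 1) - 2x/(e^2x - 1))/x,
   E_M being the Euler polynomials. *)
Definition eulerc (K : numFieldType) (b : nat -> K) (M : nat) : K :=
  2 * (1 - 2 ^+ M.+1) * b M.+1 / M.+1`!%:R.

Section EulerSeries.
Variables (K : numFieldType) (b : nat -> K) (T : nat).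
Hypothesis bernoulli_b : is_bernoulli b.
Local Notation expT := (expT K T).
Local Notation expm1T := (expm1T K T).
Local Notation bernT := (bernT b T).

Definition eulerT : {poly K} := \poly_(i < T) eulerc b i.

Lemma eulerT_mulX : 'X * eulerT = 2 *: bernT - 2 *: dil 2 bernT %[modX T].
Proof.
apply/eqmodXP => -[|i] lt_iT; rewrite coefXM coefB !coefZ coef_dil !coef_poly lt_iT /=.
  by rewrite expr0 mul1r subrr.
by rewrite ltnW //; rewrite /eulerc; ring.
Qed.

Lemma expT1_mul_bernT : (expT + 1) * bernT = 'X + 2 *: bernT %[modX T].
Proof.
transitivity ('X * expm1T * bernT + 2 *: bernT).
  by rewrite expm1T_mulX; apply: eq_eqmodX; rewrite scaler_nat; ring.
by rewrite -mulrA (mulrC _ bernT) (bernT_mul_expm1T T bernoulli_b) mulr1.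
Qed.

Lemma expT1_mul_dil2_bernT N : (N < T)%N ->
  (expT + 1) * dil 2 bernT = 2 *: bernT %[modX N].
Proof.
move=> lt_NT; have e := eqmodX_le (ltnW lt_NT) (bernT_mul_expm1T T bernoulli_b).
have e2 : dil 2 expm1T * dil 2 bernT = 1 %[modX N].
  by rewrite -comp_polyM mulrC e comp_polyC.
transitivity ((expT + 1) * dil 2 bernT * (bernT * expm1T)).
  by rewrite e mulr1.
transitivity (bernT * (dil 2 bernT * (expm1T * (expT + 1)))).
  by apply: eq_eqmodX; ring.
by rewrite -(expm1T_dil2 K lt_NT) -!scalerAr [dil 2 bernT * _]mulrC e2 mulr1.
Qed.

Lemma expT1_mul_eulerT N : (N.+1 < T)%N -> (expT + 1) * eulerT = 2 %[modX N].
Proof.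
move=> lt_NT; have le_NT := ltnW lt_NT; apply/eqmodX_XM.
transitivity ((expT + 1) * ('X * eulerT)); first by apply: eq_eqmodX; ring.
rewrite (eqmodX_le le_NT eulerT_mulX).
transitivity (2 *: ((expT + 1) * bernT) - 2 *: ((expT + 1) * dil 2 bernT)).
  by apply: eq_eqmodX; rewrite mulrBr -!scalerAr.
rewrite (eqmodX_le le_NT expT1_mul_bernT) (expT1_mul_dil2_bernT lt_NT).
by apply: eq_eqmodX; rewrite !scaler_nat; ring.
Qed.

Lemma eulerT_dilN1 N : (N.+1 < T)%N -> dil (-1) eulerT = expT * eulerT %[modX N].
Proof.
move=> lt_NT; have le_NT : (N <= T)%N by apply: ltnW (ltnW lt_NT).
have e := expT1_mul_eulerT lt_NT.
have eN : (dil (-1) expT + 1) * dil (-1) eulerT = 2 %[modX N].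
  have := eqmodX_dil (-1) e; rewrite comp_polyM comp_polyD -polyC1 comp_polyC.
  by rewrite -polyCMn comp_polyC.
have e2 : 2 * dil (-1) eulerT = 2 * (expT * eulerT) %[modX N].
  transitivity ((expT + 1) * dil (-1) eulerT * eulerT).
    by rewrite -e; apply: eq_eqmodX; ring.
  transitivity ((expT * ((dil (-1) expT + 1) * dil (-1) eulerT)
                - (expT * dil (-1) expT - 1) * dil (-1) eulerT) * eulerT).
    by apply: eq_eqmodX; ring.
  rewrite eN (eqmodX_le le_NT (expT_mul_dilN1 K T)) subrr mul0r subr0.
  by apply: eq_eqmodX; ring.
move: e2; rewrite !mulr_natl -!scaler_nat => /(eqmodXZ 2^-1).
by rewrite !scalerA mulVf ?pnatr_eq0 // !scale1r.
Qed.
End EulerSeries.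

Section EulerCoefficients.
Variables (K : numFieldType) (b : nat -> K).
Hypothesis bernoulli_b : is_bernoulli b.

Lemma eulerc_reflect M :
  (-1) ^+ M * eulerc b M = \sum_(j < M.+1) eulerc b j / (M - j)`!%:R.
Proof.
have /eqmodXP/(_ M (ltnSn M)) := eulerT_dilN1 bernoulli_b (ltnSn M.+2).
rewrite coef_dil coefMr coef_poly ltnS leqW // => ->.
apply: eq_bigr => -[j /=]; rewrite ltnS => le_jM _.
have lt_jM3 : (j < M.+3)%N by lia.
have lt_Mj3 : (M - j < M.+3)%N by lia.
by rewrite !coef_poly lt_jM3 lt_Mj3 mulrC.
Qed.

Lemma eulerc0 : eulerc b 0 = 1.
Proof. by rewrite /eulerc (bernoulli1 bernoulli_b) -[1`!]/1%N; field. Qed.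

Lemma eulerc_even j : eulerc b (2 * j).+2 = 0.
Proof. by rewrite /eulerc (bernoulli_odd bernoulli_b) !mulr0 mul0r. Qed.
End EulerCoefficients.

(** * The binomial identity behind the relation *)

Section ShiftedSequence.
Variables (K : numFieldType) (c : nat -> K) (a : nat).

(* i! times the x^i-coefficient of (x^a/a!) \sum_j c j x^j *)
Definition shift_seq (i : nat) : K :=
  if (a <= i)%N then i`!%:R / a`!%:R * c (i - a) else 0.

Lemma shift_seq_small i : (i < a)%N -> shift_seq i = 0.
Proof. by move=> lt_ia; rewrite /shift_seq leqNgt lt_ia. Qed.

Lemma shift_seq_binomial m :
  \sum_(i < (a + m).+1) shift_seq i * 'C(a + m, i)%:R
  = (a + m)`!%:R / a`!%:R * \sum_(j < m.+1) c j / (m - j)`!%:R.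
Proof.
rewrite -addnS big_split_ord /= big1 ?add0r => [|i _]; last first.
  by rewrite shift_seq_small ?mul0r.
rewrite mulr_sumr.
apply: eq_bigr => -[j /=]; rewrite ltnS => le_jm _.
rewrite /shift_seq leq_addr addKn.
have -> : ((a + m)`!%:R : K) = ('C(a + m, a + j) * (a + j)`! * (m - j)`!)%:R.
  by rewrite -mulnA -(subnDl a) bin_fact // leq_add2l.
rewrite !natrM; field.
by rewrite !natr_fact_neq0.
Qed.

Hypothesis c_reflect :
  forall M, (-1) ^+ M * c M = \sum_(j < M.+1) c j / (M - j)`!%:R.
Hypothesis odd_a : odd a.

(* For a odd, C(-x) = e^x C(x) turns into g(x) = -e^-x g(-x) for g = (x^a/a!) C. *)
Lemma shift_seq_reflect M :
  shift_seq M = (-1) ^+ M.+1 * \sum_(i < M.+1) shift_seq i * 'C(M, i)%:R.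
Proof.
case: (leqP a M) => [le_aM | lt_Ma]; last first.
  rewrite shift_seq_small // big1 ?mulr0 // => -[i /=]; rewrite ltnS => le_iM _.
  by rewrite shift_seq_small ?mul0r // (leq_ltn_trans le_iM).
rewrite -(subnKC le_aM) shift_seq_binomial -c_reflect /shift_seq leq_addr addKn.
have sign : (-1) ^+ (a + (M - a)).+1 * (-1) ^+ (M - a) = 1 :> K.
  by rewrite -exprD -signr_odd addSn -addnA addnn /= oddD odd_double odd_a.
by rewrite mulrCA; congr (_ * _); rewrite mulrA sign mul1r.
Qed.
End ShiftedSequence.

Section RelationSequence.
Variables (K : numFieldType) (b : nat -> K) (n : nat).
Hypothesis bernoulli_b : is_bernoulli b.
Hypothesis n_gt0 : (0 < n)%N.

Definition relseq : nat -> K := shift_seq (eulerc b) (2 * n).-1.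

Lemma relseq_reflect M :
  relseq M = (-1) ^+ M.+1 * \sum_(i < M.+1) relseq i * 'C(M, i)%:R.
Proof.
apply: shift_seq_reflect; first exact: eulerc_reflect.
by rewrite -subn1 oddB ?muln_gt0 // oddM /=.
Qed.

Lemma relseq_even k : (n <= k)%N -> relseq (2 * k) = relcoef b n k.
Proof.
move=> le_nk; rewrite -(subnKC le_nk); move: (k - n)%N => d {k le_nk}.
have le_nd : ((2 * n).-1 <= 2 * (n + d))%N by lia.
have e1 : (2 * (n + d) - (2 * n).-1 = (2 * d).+1)%N by lia.
have := bin_fact le_nd; rewrite e1 => fact_split.
rewrite /relseq /shift_seq /relcoef /bigB /eulerc le_nd addKn e1 /= -fact_split.
rewrite (_ : 2 * d.+1 = (2 * d).+2)%N; last by lia.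
set P := (2 : K) ^+ _; set B := b _; set s := (-1 : K) ^+ d.
have -> : ((4 ^ d.+1)%:R : K) = P.
  rewrite /P (_ : (2 * d).+2 = 2 * d.+1)%N; last by rewrite mulnS.
  by rewrite exprM natrX expr2 -natrM.
rewrite (factS (2 * d).+1) (natrM _ (2 * d).+2) (_ : (2 * d).+2 = 2 * d.+1)%N.
  2: by rewrite mulnS.
have -> : (-1) ^+ d.+1 * (P - 1) * (s * B) = (s * s) * (1 - P) * B.
  by rewrite exprS -/s; ring.
have -> : s * s = 1 by rewrite /s -expr2 -exprM mulnC exprM sqrrN !expr1n.
rewrite mul1r.
move: (fact_gt0 (2 * n).-1) (fact_gt0 (2 * d).+1).
move: (2 * n).-1`! (2 * d).+1`! => f1 f2 f1_gt0 f2_gt0.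
by rewrite !natrM; field; rewrite nat1r !pnatr_eq0 -!lt0n f1_gt0 f2_gt0.
Qed.

Lemma relseq_odd k : relseq (2 * k).+1 = (k.+1 == n)%:R.
Proof.
rewrite /relseq /shift_seq; case: eqP => [<- | ne_kn].
  rewrite -subn1 mulnSr addn2 /= subn1 /= leqnn subnn eulerc0 // mulr1.
  by rewrite divff ?natr_fact_neq0.
case: leqP => // le_nk.
have -> : ((2 * k).+1 - (2 * n).-1 = (2 * (k - n)).+2)%N by lia.
by rewrite eulerc_even // mulr0.
Qed.
End RelationSequence.

Lemma sum_ord_even_odd (K : nmodType) (F : nat -> K) m :
  \sum_(i < 2 * m) F i = \sum_(k < m) (F (2 * k)%N + F (2 * k).+1).
Proof.
elim: m => [|m IH]; first by rewrite !big_ord0.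
by rewrite mulnS !add2n !big_ord_recr /= IH addrA.
Qed.

Lemma sum_ord_delta (K : nzSemiRingType) (F : nat -> K) m j : (j < m)%N ->
  \sum_(i < m) F i * (i == j :> nat)%:R = F j.
Proof.
move=> lt_jm; rewrite (bigD1 (Ordinal lt_jm)) //= eqxx mulr1 big1 ?addr0 // => i ne_ij.
rewrite (_ : (i == j :> nat) = false) ?mulr0 //.
by apply: contraNF ne_ij => /eqP e; apply/eqP/val_inj.
Qed.

(* (-1)^(i+1) times the u^(M+1)-coefficient of calY_(i+1), as
   the u^(M+1)-coefficient of v^(i+1) is (-1)^(M+1) C(M, i) *)
Definition ycoef (K : nzRingType) (M i : nat) : K :=
  (M == i)%:R - (-1) ^+ M.+1 * 'C(M, i)%:R.

Section RelationSum.
Variables (K : numFieldType) (b : nat -> K) (n : nat).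
Hypothesis bernoulli_b : is_bernoulli b.
Hypothesis n_gt0 : (0 < n)%N.
Local Notation relseq := (relseq b n).

Lemma sum_relseq_ycoef N M : (M < N)%N -> \sum_(i < N) relseq i * ycoef K M i = 0.
Proof.
move=> lt_MN; under eq_bigr do rewrite /ycoef mulrBr [(M == _)]eq_sym.
rewrite big_split sumrN /= sum_ord_delta // (relseq_reflect bernoulli_b n_gt0).
rewrite mulr_sumr (big_ord_widen N (fun i => (-1) ^+ M.+1 * (relseq i * 'C(M, i)%:R))) //.
rewrite big_mkcond -sumrB big1 // => i _; case: ltnP => /= [_ | lt_Mi].
  by rewrite mulrCA subrr.
by rewrite bin_small // !mulr0 subrr.
Qed.

Lemma sum_relcoef_ycoef K' M : (n <= K'.+1)%N -> (M < (2 * K').+2)%N ->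
  \sum_(n <= k < K'.+1) relcoef b n k * ycoef K M (2 * k) + ycoef K M (2 * n).-1 = 0.
Proof.
move=> le_nK lt_MK; have lt_M2K : (M < 2 * K'.+1)%N by rewrite mulnS add2n.
have := sum_relseq_ycoef lt_M2K.
rewrite (sum_ord_even_odd (fun i => relseq i * ycoef K M i)) big_split /= => sum0.
rewrite -[RHS]sum0; congr (_ + _).
  rewrite big_geq_mkord big_mkcond; apply: eq_bigr => k _ /=.
  case: leqP => [le_nk | lt_kn]; first by rewrite relseq_even.
  by rewrite /relseq shift_seq_small ?mul0r //; lia.
rewrite (_ : (2 * n).-1 = (2 * n.-1).+1)%N; last by lia.
rewrite -(sum_ord_delta (fun k => ycoef K M (2 * k).+1) (j := n.-1) (m := K'.+1)); last by lia.
apply: eq_bigr => k _; rewrite (relseq_odd bernoulli_b n_gt0) mulrC.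
by rewrite (_ : (k.+1 == n) = (k == n.-1 :> nat)) //; apply/eqP/eqP; lia.
Qed.
End RelationSum.

(** * Coefficients of calY *)

Section Truncation.
Variable K : fieldType.
Implicit Types f g : fps K.

Definition trunc N f : {poly K} := \poly_(i < N) f i.

Lemma coef_trunc N f i : (i < N)%N -> (trunc N f)`_i = f i.
Proof. by move=> lt_iN; rewrite coef_poly lt_iN. Qed.

Lemma trunc1 N : trunc N (fps1 K) = 1 %[modX N].
Proof. by apply/eqmodXP => i lt_iN; rewrite coef_trunc // coef1. Qed.

Lemma truncu N : trunc N (fpsu K) = 'X %[modX N].
Proof. by apply/eqmodXP => i lt_iN; rewrite coef_trunc // coefX. Qed.

Lemma truncD N f g : trunc N (fpsadd f g) = trunc N f + trunc N g.
Proof. by apply/polyP => i; rewrite coefD !coef_poly; case: ifP; rewrite ?addr0. Qed.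

Lemma truncZ N c f : trunc N (fpsscale c f) = c *: trunc N f.
Proof. by apply/polyP => i; rewrite coefZ !coef_poly; case: ifP; rewrite ?mulr0. Qed.

Lemma truncB N f g : trunc N (fpssub f g) = trunc N f - trunc N g.
Proof. by apply/polyP => i; rewrite coefB !coef_poly; case: ifP; rewrite ?subr0. Qed.

Lemma truncM N f g : trunc N (fpsmul f g) = trunc N f * trunc N g %[modX N].
Proof.
apply/eqmodXP => m lt_mN; rewrite coef_trunc // coefM; apply: eq_bigr => -[j /=].
rewrite ltnS => le_jm _.
by rewrite !coef_trunc // (leq_ltn_trans _ lt_mN) ?leq_subr.
Qed.

Lemma truncX N f k : trunc N (fpspow f k) = trunc N f ^+ k %[modX N].
Proof.
elim: k => [|k IH]; first exact: trunc1.
by rewrite /fpspow iterS -/(fpspow f k) truncM IH exprS.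
Qed.
End Truncation.

Section InverseSeries.
Variables (K : fieldType) (v : fps K).
Hypothesis v_inv : fpsmul (fpsadd (fps1 K) (fpsu K)) (fpsadd (fps1 K) v) = fps1 K.

Lemma trunc_inv T : (1 + 'X) * (1 + trunc T v) = 1 %[modX T].
Proof.
have := truncM T (fpsadd (fps1 K) (fpsu K)) (fpsadd (fps1 K) v).
by rewrite v_inv !truncD !trunc1 truncu => e; symmetry.
Qed.

(* v = -u (1 + v) *)
Lemma trunc_exprS T j :
  trunc T v ^+ j.+1 = - ('X * (trunc T v ^+ j + trunc T v ^+ j.+1)) %[modX T].
Proof.
transitivity ((trunc T v - ((1 + 'X) * (1 + trunc T v) - 1)) * trunc T v ^+ j).
  by rewrite trunc_inv subrr subr0 exprS.
by apply: eq_eqmodX; rewrite exprS; ring.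
Qed.

Lemma coef_trunc_exprS T j m : (m < T)%N ->
  (trunc T v ^+ j.+1)`_m = if m is M.+1 then (-1) ^+ m * 'C(M, j)%:R else 0.
Proof.
have rec k i : (i.+1 < T)%N ->
    (trunc T v ^+ k.+1)`_i.+1 = - ((trunc T v ^+ k)`_i + (trunc T v ^+ k.+1)`_i).
  by move=> lt_iT; rewrite (coef_eqmodX (trunc_exprS T k)) // (coefN ('X * _)) coefXM coefD.
have coef0 k : (0 < T)%N -> (trunc T v ^+ k.+1)`_0 = 0.
  by move=> T_gt0; rewrite (coef_eqmodX (trunc_exprS T k)) // (coefN ('X * _)) coefXM oppr0.
elim: j m => [|j IHj] m; elim: m => [|m IHm] lt_mT; rewrite ?coef0 //.
  rewrite rec // expr0 coef1 IHm ?(ltnW lt_mT) //.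
  case: m {IHm lt_mT} => [|m] /=; rewrite ?addr0 ?add0r !bin0 !mulr1 ?expr1 //.
  by rewrite (exprS _ m.+1) mulN1r.
rewrite rec // IHm ?(ltnW lt_mT) // IHj ?(ltnW lt_mT) //.
case: m {IHm lt_mT} => [|m] /=; first by rewrite bin0n mulr0 addr0 oppr0.
by rewrite binS natrD !exprS; ring.
Qed.

Lemma trunc_calY T k :
  trunc T (calY v k) = (-1) ^+ k *: ('X ^+ k - trunc T v ^+ k) %[modX T].
Proof. by rewrite /calY truncZ truncB !truncX truncu. Qed.

Lemma coef_calY T k m : (m < T)%N ->
  calY v k m = (-1) ^+ k * ((m == k)%:R - (trunc T v ^+ k)`_m).
Proof.
move=> lt_mT; rewrite -(coef_trunc _ lt_mT) (coef_eqmodX (trunc_calY T k) lt_mT).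
by rewrite coefZ coefB coefXn.
Qed.

Lemma calY_coef0 j : calY v j.+1 0 = 0.
Proof. by rewrite (coef_calY (T := 1)) // coef_trunc_exprS // subr0 mulr0. Qed.

Lemma calY_coefS j M : calY v j.+1 M.+1 = (-1) ^+ j.+1 * ycoef K M j.
Proof. by rewrite (coef_calY (T := M.+2)) // coef_trunc_exprS // eqSS. Qed.

Lemma calY_coef_small k m : (m < k)%N -> calY v k m = 0.
Proof.
case: k m => [|k] [|M] // lt_Mk; rewrite ?calY_coef0 // calY_coefS /ycoef.
by rewrite bin_small // ltn_eqF // mulr0 subrr mulr0.
Qed.
End InverseSeries.

Section CalYRelation.
Variables (K : numFieldType) (b : nat -> K) (v : fps K).
Hypothesis bernoulli_b : is_bernoulli b.
Hypothesis v_inv : fpsmul (fpsadd (fps1 K) (fpsu K)) (fpsadd (fps1 K) v) = fps1 K.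

(* The terms with k > K' have no u^m-coefficient. *)
Lemma calY_relation_coef n K' m : (0 < n)%N -> (m <= (2 * K').+1)%N ->
  \sum_(n <= k < K'.+1) relcoef b n k * calY v (2 * k).+1 m = calY v (2 * n) m.
Proof.
move=> n_gt0 le_mK; case: (ltnP K' n) => [lt_Kn | le_nK].
  by rewrite big_geq // calY_coef_small // (leq_ltn_trans le_mK) // !mul2n ltn_Sdouble.
have e2n : (2 * n = (2 * n).-1.+1)%N by rewrite prednK // muln_gt0.
case: m le_mK => [|M] le_MK.
  rewrite big1 => [|k _]; last by rewrite calY_coef0 ?mulr0.
  by rewrite calY_coef_small // muln_gt0.
rewrite e2n calY_coefS // -e2n exprM sqrrN !expr1n mul1r.
have sign_odd k : (-1) ^+ (2 * k).+1 = -1 :> K by rewrite exprS exprM sqrrN !expr1n mulr1.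
under eq_bigr do rewrite calY_coefS // sign_odd mulN1r mulrN.
apply/esym/eqP; rewrite sumrN -addr_eq0 addrC.
by rewrite (sum_relcoef_ycoef bernoulli_b n_gt0) // leqW.
Qed.
End CalYRelation.

(** * Passing to the Onsager algebra *)

Section TaylorAtOne.
Variables (K : fieldType) (v : fps K).
Hypothesis v_inv : fpsmul (fpsadd (fps1 K) (fpsu K)) (fpsadd (fps1 K) v) = fps1 K.
Variable L : nat.

(* Expansion at t = 1, truncated below u^L: t |-> 1 + u and t^-1 |-> 1 + v. *)
Definition taylor (x : laurent K) : {poly K} :=
  (x.1 \Po ('X + 1)) * (1 + trunc L v) ^+ x.2.

Lemma taylor_tinv_inv k : (('X + 1) * (1 + trunc L v)) ^+ k = 1 %[modX L].
Proof. by have := eqmodXX k (trunc_inv v_inv L); rewrite expr1n addrC. Qed.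

Lemma taylorD x y : taylor (ladd x y) = taylor x + taylor y %[modX L].
Proof.
rewrite /taylor /ladd /= comp_polyD !comp_polyM !comp_Xn_poly.
transitivity ((x.1 \Po ('X + 1)) * (1 + trunc L v) ^+ x.2 * (('X + 1) * (1 + trunc L v)) ^+ y.2
  + (y.1 \Po ('X + 1)) * (1 + trunc L v) ^+ y.2 * (('X + 1) * (1 + trunc L v)) ^+ x.2).
  by apply: eq_eqmodX; rewrite !exprMn exprD; ring.
by rewrite !taylor_tinv_inv !mulr1.
Qed.

Lemma taylorZ c x : taylor (lscale c x) = c *: taylor x.
Proof. by rewrite /taylor /lscale /= comp_polyZ scalerAl. Qed.

Lemma taylorM x y : taylor (lmul x y) = taylor x * taylor y.
Proof. by rewrite /taylor /lmul /= comp_polyM exprD; ring. Qed.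

Lemma taylorC c : taylor (lconst c) = c%:P.
Proof. by rewrite /taylor /lconst /= comp_polyC expr0 mulr1. Qed.

Lemma taylor_t : taylor (lt K) = 'X + 1.
Proof. by rewrite /taylor /lt /= comp_polyX expr0 mulr1. Qed.

Lemma taylor_tinv : taylor (ltinv K) = 1 + trunc L v.
Proof. by rewrite /taylor /ltinv /= -polyC1 comp_polyC polyC1 mul1r expr1. Qed.

Lemma taylorX x k : taylor (lpow x k) = taylor x ^+ k.
Proof.
elim: k => [|k IH]; first by rewrite /lpow /= taylorC expr0.
by rewrite /lpow iterS -/(lpow x k) taylorM IH exprS.
Qed.

Lemma taylorB x y : taylor (lsub x y) = taylor x - taylor y %[modX L].
Proof. by rewrite /lsub taylorD taylorZ scaleN1r. Qed.

Lemma taylor_lsum n K' F :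
  taylor (lsum n K' F) = \sum_(n <= k < K') taylor (F k) %[modX L].
Proof.
rewrite /lsum /index_iota; elim: (iota n (K' - n)) => [|k s IH] /=.
  by rewrite big_nil taylorC.
by rewrite big_cons taylorD IH.
Qed.

Lemma taylor_OY k : taylor (OY K k) = (-1) ^+ k *: ('X ^+ k - trunc L v ^+ k) %[modX L].
Proof.
rewrite /OY taylorZ; apply: eqmodXZ.
rewrite taylorB !taylorX !taylorB taylor_t taylor_tinv taylorC.
by rewrite addrK (addrC 1) addrK.
Qed.

Lemma coef_taylor_OY k m : (m < L)%N -> (taylor (OY K k))`_m = calY v k m.
Proof.
move=> lt_mL; rewrite (coef_eqmodX (taylor_OY k) lt_mL) -(coef_eqmodX (trunc_calY v L k) lt_mL).
exact: coef_trunc.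
Qed.

Lemma in_tideal_taylor x : taylor x = 0 %[modX L] -> in_tideal L x.
Proof.
move=> x_eq0.
have x1_eq0 : x.1 \Po ('X + 1) = 0 %[modX L].
  transitivity ((x.1 \Po ('X + 1)) * (('X + 1) * (1 + trunc L v)) ^+ x.2).
    by rewrite taylor_tinv_inv mulr1.
  transitivity (taylor x * ('X + 1) ^+ x.2).
    by apply: eq_eqmodX; rewrite /taylor exprMn; ring.
  by rewrite x_eq0 mul0r.
have t0 : take_poly L (x.1 \Po ('X + 1)) = 0 by rewrite -(take_poly0r _ L); exact: x1_eq0.
have := poly_take_drop L (x.1 \Po ('X + 1)); rewrite t0 add0r.
move: (drop_poly _ _) => D e; exists (D \Po ('X - 1)), x.2.
rewrite -[in LHS](comp_polyXaddC_K x.1 1) polyC1 -e comp_polyM comp_Xn_poly.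
by congr (_ * _); exact: mulrC.
Qed.
End TaylorAtOne.

Section OnsagerQuotient.
Variables (K : numFieldType) (b : nat -> K) (v : fps K) (L : nat).
Hypothesis bernoulli_b : is_bernoulli b.
Hypothesis v_inv : fpsmul (fpsadd (fps1 K) (fpsu K)) (fpsadd (fps1 K) v) = fps1 K.

Lemma in_tideal_OY k : (L <= k)%N -> in_tideal L (OY K k).
Proof.
move=> le_Lk; apply: (in_tideal_taylor v_inv); apply/eqmodXP => m lt_mL.
by rewrite coef0 (coef_taylor_OY v_inv) // (calY_coef_small v_inv) // (leq_trans lt_mL).
Qed.

Lemma in_tideal_OY_relation n K' : (0 < n)%N -> (L <= (2 * K').+1)%N ->
  in_tideal L (lsub (OY K (2 * n))
                    (lsum n K'.+1 (fun k => lscale (relcoef b n k) (OY K (2 * k).+1)))).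
Proof.
move=> n_gt0 le_LK; apply: (in_tideal_taylor v_inv).
rewrite (taylorB v_inv L) (taylor_lsum v_inv L); apply/eqmodXP => m lt_mL.
rewrite coefB coef_sum coef0.
under eq_bigr do rewrite taylorZ coefZ (coef_taylor_OY v_inv _ lt_mL).
rewrite (coef_taylor_OY v_inv _ lt_mL) (calY_relation_coef bernoulli_b v_inv) ?subrr //.
by rewrite ltnW // (leq_trans lt_mL).
Qed.
End OnsagerQuotient.

Theorem proposition3 (R : realType) (b : nat -> R[i]) (v : fps R[i]) :
  is_bernoulli b ->
  (* v = (1+u)^-1 - 1 *)
  fpsmul (fpsadd (fps1 R[i]) (fpsu R[i])) (fpsadd (fps1 R[i]) v) = fps1 R[i] ->
  calY v 0 = fps0 R[i] /\
  (forall n : nat, (1 <= n)%N ->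
     forall m : nat, exists N : nat, forall K : nat, (N <= K)%N ->
       \sum_(n <= k < K.+1) relcoef b n k * calY v (2 * k).+1 m
       = calY v (2 * n) m) /\
  (forall L : nat, (1 <= L)%N ->
     (forall k : nat, (L <= k)%N -> in_tideal L (OY R[i] k)) /\
     (forall n K : nat, (1 <= n)%N -> (L <= (2 * K).+1)%N ->
        in_tideal L
          (lsub (OY R[i] (2 * n))
                (lsum n K.+1 (fun k => lscale (relcoef b n k) (OY R[i] (2 * k).+1)))))).
Proof.
move=> bernoulli_b v_inv; split.
  by apply: functional_extensionality => m; rewrite /calY /fpsscale /fpssub subrr mulr0.
split.
  move=> n n_gt0 m; exists m => K le_mK.
  apply: (calY_relation_coef bernoulli_b v_inv n_gt0).
  by rewrite (leq_trans le_mK) // leqW // leq_pmull.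
move=> L _; split=> [k | n K n_gt0]; first exact: (in_tideal_OY v_inv).
exact: (in_tideal_OY_relation bernoulli_b v_inv).
Qed.
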